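(* Let $R$ be an associative commutative ring with identity, $f=\frac{1}{1-X}\in R[[X]]$, and for $h\in R[[X]]$ let $\alpha[h]:g\mapsto h+g$ and $\mu[h]:g\mapsto hg$ be maps $R[[X]]\to R[[X]]$. Let $K$ be the group (under composition) generated by $\{\alpha[sf],\mu[f]\mid s\in R\}$ and let $L$ be the group generated by the maps $\{\,g\mapsto f\cdot(s+g)\mid s\in R\,\}$ (i.e. $\mu[f]\circ\alpha[s]$). Then $K=L$.
   Context: $R[[X]]$ is the ring of formal power series over $R$; $f=\sum_{k\ge0}X^k$ is invertible in $R[[X]]$, so all the listed maps are bijections of $R[[X]]$. *)

From HB Require Import structures.
From mathcomp Require Import all_boot all_algebra.
Set Implicit Arguments. Unset Strict Implicit. Unset Printing Implicit Defensive.
Import GRing.Theory.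
Local Open Scope ring_scope.

Definition fps (R : comPzRingType) := nat -> R.

Section FPS.
Variable R : comPzRingType.

Definition fps_add (a b : fps R) : fps R := fun n => a n + b n.
Definition fps_mul (a b : fps R) : fps R :=
  fun n => \sum_(i < n.+1) a i * b (n - i)%N.
Definition fps_const (s : R) : fps R := fun n => if n == 0%N then s else 0.
Definition fps_scale (s : R) (h : fps R) : fps R := fun n => s * h n.
(* f = 1/(1-X) = sum_k X^k *)
Definition fps_geom : fps R := fun _ => 1.

Definition alpha (h : fps R) : fps R -> fps R := fun g => fps_add h g.
Definition mu (h : fps R) : fps R -> fps R := fun g => fps_mul h g.
End FPS.

Inductive gen_group {T : Type} (S : (T -> T) -> Prop) : (T -> T) -> Prop :=
| gen_id : gen_group S id
| gen_comp : forall s g, S s -> gen_group S g -> gen_group S (s \o g)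
| gen_comp_inv : forall s s' g, S s -> cancel s s' -> cancel s' s ->
    gen_group S g -> gen_group S (s' \o g).

Definition K_gens (R : comPzRingType) (phi : fps R -> fps R) : Prop :=
  (exists s : R, phi = alpha (fps_scale s (fps_geom R))) \/ phi = mu (fps_geom R).

Definition L_gens (R : comPzRingType) (phi : fps R -> fps R) : Prop :=
  exists s : R, phi = (mu (fps_geom R)) \o (alpha (fps_const s)).

(* Since f (s + g) = s f + f g, we have mu[f] o alpha[s] = alpha[sf] o mu[f],
   so the generators of L are products of generators of K.  Conversely
   mu[f] = mu[f] o alpha[0] and alpha[sf] = (mu[f] o alpha[s]) o mu[f]^-1 are
   in L.  All generators are bijections (mu[f] is inverted by mu[1 - X]), so
   each generated group is closed under inverses and the two groups coincide. *)

From mathcomp Require Import all_boot all_algebra.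
From Stdlib Require Import FunctionalExtensionality.
Set Implicit Arguments. Unset Strict Implicit. Unset Printing Implicit Defensive.
Import GRing.Theory.
Local Open Scope ring_scope.

Section GeneratedGroup.
Variables (T : Type) (S : (T -> T) -> Prop).

Lemma gen_group_comp g h : gen_group S g -> gen_group S h -> gen_group S (g \o h).
Proof.
elim=> [|s g' Ss _ IH|s s' g' Ss sK s'K _ IH] Gh.
- exact: Gh.
- exact: gen_comp Ss (IH Gh).
- exact: gen_comp_inv sK s'K (IH Gh).
Qed.

Lemma gen_group_gen s : S s -> gen_group S s.
Proof. by move=> Ss; apply: gen_comp Ss (gen_id S). Qed.

Lemma gen_group_inv_gen s s' : S s -> cancel s s' -> cancel s' s -> gen_group S s'.
Proof. by move=> Ss sK s'K; apply: gen_comp_inv Ss sK s'K (gen_id S). Qed.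

Hypothesis gens_bij : forall {s}, S s -> bijective s.

Lemma gen_group_bij g : gen_group S g -> bijective g.
Proof.
elim=> [|s g' Ss _ bij_g'|s s' g' _ sK s'K _ bij_g'].
- exact: (Bijective (g := id)).
- exact: bij_comp (gens_bij Ss) bij_g'.
- exact: bij_comp (Bijective s'K sK) bij_g'.
Qed.

Lemma gen_group_can g : gen_group S g -> exists2 g', gen_group S g' & cancel g g'.
Proof.
elim=> [|s g' Ss _ [h Gh g'K]|s s' g' Ss sK s'K _ [h Gh g'K]].
- by exists id; [exact: gen_id|].
- have [s' sK s'K] := gens_bij Ss.
  exists (h \o s'); first exact: gen_group_comp Gh (gen_group_inv_gen Ss sK s'K).
  exact: can_comp sK g'K.
- exists (h \o s); first exact: gen_group_comp Gh (gen_group_gen Ss).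
  exact: can_comp s'K g'K.
Qed.

Lemma gen_group_inv g g' : gen_group S g -> cancel g g' -> gen_group S g'.
Proof.
move=> Gg gK; have [h Gh hK] := gen_group_can Gg.
suff -> : g' = h by [].
exact/functional_extensionality/(bij_can_eq (gen_group_bij Gg) gK hK).
Qed.

End GeneratedGroup.

Lemma gen_group_sub T (S U : (T -> T) -> Prop) g :
  (forall u, U u -> bijective u) -> (forall s, S s -> gen_group U s) ->
  gen_group S g -> gen_group U g.
Proof.
move=> Ubij SU; elim=> [|s g' Ss _ IH|s s' g' Ss sK _ _ IH].
- exact: gen_id.
- exact: gen_group_comp (SU s Ss) IH.
- exact: gen_group_comp (gen_group_inv Ubij (SU s Ss) sK) IH.
Qed.

Section PowerSeries.
Variable R : comPzRingType.
Local Notation f := (fps_geom R).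

Definition fps_opp (h : fps R) : fps R := fun n => - h n.

Definition fps_geomV : fps R := fun n => if n == 0%N then 1 else if n == 1%N then -1 else 0.

Lemma alphaK (h : fps R) : cancel (alpha h) (alpha (fps_opp h)).
Proof. by move=> g; apply: functional_extensionality => n; rewrite /alpha /fps_add addKr. Qed.

Lemma alphaNK (h : fps R) : cancel (alpha (fps_opp h)) (alpha h).
Proof. by move=> g; apply: functional_extensionality => n; rewrite /alpha /fps_add addNKr. Qed.

Lemma alpha_const0 : alpha (fps_const (0 : R)) = id.
Proof.
apply: functional_extensionality => g; apply: functional_extensionality => n.
by rewrite /alpha /fps_add /fps_const; case: ifP; rewrite add0r.
Qed.

Lemma fps_mulDr (a b c : fps R) : fps_mul a (fps_add b c) = fps_add (fps_mul a b) (fps_mul a c).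
Proof.
apply: functional_extensionality => n.
by rewrite /fps_mul /fps_add -big_split; apply: eq_bigr => i _; rewrite mulrDr.
Qed.

Lemma fps_mul_const (a : fps R) s : fps_mul a (fps_const s) = fps_scale s a.
Proof.
apply: functional_extensionality => n.
rewrite /fps_mul /fps_scale big_ord_recr big1 => [|i _]; last first.
  by rewrite /fps_const subn_eq0 leqNgt /= ltn_ord mulr0.
by rewrite /= subnn /fps_const eqxx add0r mulrC.
Qed.

Lemma fps_mul_geomE (h : fps R) n : fps_mul f h n = \sum_(i < n.+1) h i.
Proof.
rewrite /fps_mul (reindex_inj rev_ord_inj) /=.
by apply: eq_bigr => i _; rewrite mul1r subSS subKn // -ltnS.
Qed.

Lemma fps_mul_geomV0 (h : fps R) : fps_mul fps_geomV h 0 = h 0%N.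
Proof. by rewrite /fps_mul big_ord_recl big_ord0 /fps_geomV /= mul1r addr0. Qed.

Lemma fps_mul_geomVS (h : fps R) n : fps_mul fps_geomV h n.+1 = h n.+1 - h n.
Proof.
rewrite /fps_mul big_ord_recl big_ord_recl /= big1 => [|i _]; last first.
  by rewrite /fps_geomV /bump /= mul0r.
by rewrite /fps_geomV /bump /= mul1r subn0 addn0 subn1 mulN1r addr0.
Qed.

Lemma mu_geomK : cancel (mu f) (mu fps_geomV).
Proof.
move=> g; apply: functional_extensionality => -[|n]; rewrite /mu.
  by rewrite fps_mul_geomV0 fps_mul_geomE big_ord_recl big_ord0 addr0.
by rewrite fps_mul_geomVS !fps_mul_geomE big_ord_recr /= addrAC subrr add0r.
Qed.

Lemma mu_geomVK : cancel (mu fps_geomV) (mu f).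
Proof.
move=> g; apply: functional_extensionality => n; rewrite /mu fps_mul_geomE.
elim: n => [|n IH]; first by rewrite big_ord_recl big_ord0 fps_mul_geomV0 addr0.
by rewrite big_ord_recr /= IH fps_mul_geomVS addrC subrK.
Qed.

Lemma mu_geom_alpha_const s : mu f \o alpha (fps_const s) = alpha (fps_scale s f) \o mu f.
Proof. by apply: functional_extensionality => g; rewrite /= /mu fps_mulDr fps_mul_const. Qed.

Lemma K_gens_bij (phi : fps R -> fps R) : K_gens phi -> bijective phi.
Proof.
case=> [[s ->]|->]; first exact: Bijective (alphaK _) (alphaNK _).
exact: Bijective mu_geomK mu_geomVK.
Qed.

Lemma L_gens_bij (phi : fps R -> fps R) : L_gens phi -> bijective phi.
Proof.
case=> s ->; apply: bij_comp; last exact: Bijective (alphaK _) (alphaNK _).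
exact: Bijective mu_geomK mu_geomVK.
Qed.

Lemma L_gens_in_K (phi : fps R -> fps R) : L_gens phi -> gen_group (@K_gens R) phi.
Proof.
case=> s ->; rewrite mu_geom_alpha_const.
by apply: gen_comp; [left; exists s | apply: gen_group_gen; right].
Qed.

Lemma K_gens_in_L (phi : fps R -> fps R) : K_gens phi -> gen_group (@L_gens R) phi.
Proof.
have L_mu : gen_group (@L_gens R) (mu f).
  have L0 : L_gens (mu f \o alpha (fps_const 0)) by exists 0.
  by rewrite alpha_const0 in L0; apply: gen_group_gen.
case=> [[s ->]|->]; last exact: L_mu.
have -> : alpha (fps_scale s f) = (mu f \o alpha (fps_const s)) \o mu fps_geomV.
  by apply: functional_extensionality => g; rewrite mu_geom_alpha_const /= mu_geomVK.
apply: gen_group_comp; first by apply: gen_group_gen; exists s.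
exact: (gen_group_inv L_gens_bij L_mu mu_geomK).
Qed.

End PowerSeries.

Theorem lemma8p1 (R : comPzRingType) :
  forall phi : fps R -> fps R,
    gen_group (K_gens (R:=R)) phi <-> gen_group (L_gens (R:=R)) phi.
Proof.
move=> phi; split; apply: gen_group_sub.
- exact: L_gens_bij.
- exact: K_gens_in_L.
- exact: K_gens_bij.
- exact: L_gens_in_K.
Qed.
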